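(* As formal power series in $y$, \[ \sum_{n\ge0}H_n(x)y^n=\frac{2+y}{1-xy^2(1+y)}-(1-x)y-1, \] and the $(1,2,3)$-Padovan numbers satisfy \[ \sum_{n\ge0}p'_ny^n=\frac{1+2y+2y^2}{1-y^2-y^3}. \]
   Context: For $n\ge1$ let $\Xi_n$ be the poset on $\{x_1,\dots,x_n\}$ whose cover relations are exactly: $x_2\prec x_1$, $x_3\prec x_2$, and for $3\le i\le n-1$, $x_i\prec x_{i+1}$ if $i$ is odd and $x_{i+1}\prec x_i$ if $i$ is even (so $x_1>x_2>x_3<x_4>x_5<\cdots$). A filter of a poset is an up-closed subset. The matchable Lucas cube $\Omega_n$ is the graph whose vertices are the filters of $\Xi_n$, two filters adjacent iff one is obtained from the other by deleting a single element; $\Omega_0$ is the one-vertex graph. $h_{n,k}$ is the number of maximal induced $k$-dimensional hypercubes in $\Omega_n$ (induced $k$-cubes not contained in an induced $(k+1)$-cube), and $H_n(x)=\sum_{k\ge0}h_{n,k}x^k$ is the maximal cube polynomial. The $(1,2,3)$-Padovan numbers are $p'_0=1$, $p'_1=2$, $p'_2=3$, $p'_n=p'_{n-2}+p'_{n-3}$ for $n\ge3$. *)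

From mathcomp Require Import all_boot all_order all_algebra.
Set Implicit Arguments. Unset Strict Implicit. Unset Printing Implicit Defensive.
Import GRing.Theory.

(* Element x_{i+1} of Xi_n is represented by i : 'I_n (0-indexed).
   [covers a b] means x_{a+1} is covered by x_{b+1}  (x_{a+1} < x_{b+1}).
   Covers: x2 < x1, x3 < x2, and for 3 <= i <= n-1 (1-indexed):
   x_i < x_{i+1} if i odd, x_{i+1} < x_i if i even.  With j = i-1 (0-indexed,
   2 <= j): j even gives covers j j+1, j odd gives covers j+1 j. *)
Definition covers (a b : nat) : bool :=
  [|| (a == 1) && (b == 0),
      (a == 2) && (b == 1),
      [&& 2 <= a, b == a.+1 & ~~ odd a]
    | [&& 2 <= b, a == b.+1 & odd b]].

Definition Xi_le (n : nat) (a b : 'I_n) : bool :=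
  connect (fun u v : 'I_n => covers u v) a b.

Definition isFilter (n : nat) (F : {set 'I_n}) : bool :=
  [forall a : 'I_n, forall b : 'I_n, ((a \in F) && Xi_le a b) ==> (b \in F)].

(* vertices: filters of Xi_n; adjacency: one is the other minus one element *)
Definition Omega_adj (n : nat) (A B : {set 'I_n}) : bool :=
  [exists a : 'I_n, (a \in A) && (B == A :\ a)] ||
  [exists a : 'I_n, (a \in B) && (A == B :\ a)].

Definition cube_adj (k : nat) (u v : {ffun 'I_k -> bool}) : bool :=
  #|[set i | u i != v i]| == 1.

Definition isInducedCube (n k : nat) (S : {set {set 'I_n}}) : bool :=
  [forall A in S, isFilter A] &&
  [exists f : {ffun {ffun 'I_k -> bool} -> {set 'I_n}},
     [&& injectiveb f, S == [set f u | u : {ffun 'I_k -> bool}] &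
         [forall u, forall v, Omega_adj (f u) (f v) == cube_adj u v]]].

Definition isMaximalCube (n k : nat) (S : {set {set 'I_n}}) : bool :=
  @isInducedCube n k S &&
  ~~ [exists T : {set {set 'I_n}}, @isInducedCube n k.+1 T && (S \subset T)].

Definition h (n k : nat) : nat := #|[set S : {set {set 'I_n}} | @isMaximalCube n k S]|.

Fixpoint padovan (n : nat) : nat :=
  match n with
  | 0 => 1
  | 1 => 2
  | 2 => 3
  | (S m as p).+2 => padovan p + padovan m
  end.

Definition fps := nat -> int.
Definition fps_const (c : int) : fps := fun n => if n == 0 then c else 0%R.
Definition fps_X : fps := fun n => if n == 1 then 1%R else 0%R.
Definition fps_add (f g : fps) : fps := fun n => (f n + g n)%R.
Definition fps_sub (f g : fps) : fps := fun n => (f n - g n)%R.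
Definition fps_mul (f g : fps) : fps :=
  fun n => (\sum_(i < n.+1) f i * g (n - i)%N)%R.

(* bivariate formal power series in (y, x): f n k = coefficient of y^n x^k *)
Definition fps2 := nat -> nat -> int.
Definition fps2_const (c : int) : fps2 :=
  fun n k => if (n == 0) && (k == 0) then c else 0%R.
Definition fps2_Y : fps2 := fun n k => if (n == 1) && (k == 0) then 1%R else 0%R.
Definition fps2_X : fps2 := fun n k => if (n == 0) && (k == 1) then 1%R else 0%R.
Definition fps2_add (f g : fps2) : fps2 := fun n k => (f n k + g n k)%R.
Definition fps2_sub (f g : fps2) : fps2 := fun n k => (f n k - g n k)%R.
Definition fps2_mul (f g : fps2) : fps2 :=
  fun n k => (\sum_(i < n.+1) \sum_(j < k.+1) f i j * g (n - i)%N (k - j)%N)%R.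

(* sum_{n>=0} H_n(x) y^n, with H_n(x) = sum_k h_{n,k} x^k *)
Definition Hser : fps2 := fun n k => ((h n k)%:Z)%R.
Definition Pser : fps := fun n => ((padovan n)%:Z)%R.

From mathcomp Require Import all_boot all_order all_algebra zify.
Set Implicit Arguments. Unset Strict Implicit. Unset Printing Implicit Defensive.

(* An induced k-cube of the graph of subsets of a finite set under one-element
   deletion is an interval [A, A + D] with |D| = k: opposite edges of a square
   carry the same element, so all edges in one direction of the cube do.  The
   cube lies in Omega_n iff A and every A + d (d in D) are filters, and it is
   maximal iff D is the set Add(A) of elements addable to A and every element
   removable from A covers an element of Add(A).  Hence h_{n,k} counts the
   filters of Xi_n with this property and |Add(A)| = k.  Along the zigzag Xi_n
   both conditions are local and, from the third element on, periodic of period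
   2; a finite check on the last letters of the indicator word of A gives
   h_{n+5,k+1} = h_{n+3,k} + h_{n+2,k} and h_{n+5,0} = 0, which together with
   h_0, ..., h_4 is the first identity.  The second one is the recurrence of p'. *)

(** * Subcubes of the Boolean lattice *)

Section BooleanCubes.
Variable T : finType.
Implicit Types A D X Y Z W : {set T}.

Definition symdiff X Y : {set T} := [set x | (x \in X) (+) (x \in Y)].

Definition subcube A D : {set {set T}} :=
  [set X : {set T} | (A \subset X) && (X \subset A :|: D)].

Lemma symdiffC X Y : symdiff X Y = symdiff Y X.
Proof. by apply/setP => x; rewrite !inE addbC. Qed.

Lemma symdiff_inj X : injective (symdiff X).
Proof.
move=> Y Y' /setP E; apply/setP => x; move: (E x); rewrite !inE.
by case: (x \in X) => // /negb_inj.
Qed.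

Lemma symdiff_eq1 X Y a :
  symdiff X Y = [set a] <-> forall x, (x \in X) (+) (x \in Y) = (x == a).
Proof.
split => [/setP E x | E]; first by move: (E x); rewrite !inE.
by apply/setP => x; rewrite !inE E.
Qed.

Lemma symdiff_square X Y Z W a b c c' :
  symdiff X Y = [set a] -> symdiff X Z = [set b] -> a != b ->
  symdiff Y W = [set c] -> symdiff Z W = [set c'] -> W != X -> c = b.
Proof.
move=> /symdiff_eq1 XY /symdiff_eq1 XZ ab /symdiff_eq1 YW /symdiff_eq1 ZW WX.
have XWa x : (x \in X) (+) (x \in W) = (x == a) (+) (x == c).
  by rewrite -XY -YW; case: (x \in X); case: (x \in Y); case: (x \in W).
have XWb x : (x \in X) (+) (x \in W) = (x == b) (+) (x == c').
  by rewrite -XZ -ZW; case: (x \in X); case: (x \in Z); case: (x \in W).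
have ca : c != a.
  apply: contraNneq WX => ca; apply/eqP/setP => x.
  by move: (XWa x); rewrite ca addbb; case: (x \in X); case: (x \in W).
have E x : (x == a) (+) (x == c) = (x == b) (+) (x == c') by rewrite -XWa XWb.
have := E c; rewrite eqxx (negbTE ca) /=.
case: (eqVneq c b) => // cb /= /esym/eqP cc'.
by have := E a; rewrite eqxx (negbTE ab) -cc' eq_sym (negbTE ca).
Qed.

Lemma disjoint_setU1 A D b : [disjoint A & b |: D] = (b \notin A) && [disjoint A & D].
Proof. by rewrite -!setI_eq0 setIUr setU_eq0 -disjoints1 disjoint_sym -setI_eq0. Qed.

Lemma subcube_min A D : A \in subcube A D.
Proof. by rewrite inE subxx subsetUl. Qed.

Lemma subcube_max A D : A :|: D \in subcube A D.
Proof. by rewrite inE subxx subsetUl. Qed.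

Lemma subset_subcube A D A' D' :
  (subcube A D \subset subcube A' D') = (A' \subset A) && (A :|: D \subset A' :|: D').
Proof.
apply/subsetP/andP => [sub | [A'A AD] X].
  by have /sub := subcube_min A D; have /sub := subcube_max A D;
     rewrite !inE => /andP[_ ->] /andP[-> _].
by rewrite !inE => /andP[AX XD]; rewrite (subset_trans A'A AX) (subset_trans XD AD).
Qed.

Lemma subcube_injl A D A' D' : subcube A D = subcube A' D' -> A = A'.
Proof.
move=> E; apply/eqP; rewrite eqEsubset.
have := subcube_min A D; have := subcube_min A' D'.
by rewrite E -{1}E !inE => /andP[-> _] /andP[-> _].
Qed.

End BooleanCubes.

Section HypercubeCoordinates.
Variable k : nat.
Implicit Types u v : {ffun 'I_k -> bool}.

Definition cube_origin : {ffun 'I_k -> bool} := [ffun => false].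

Definition flip u (i : 'I_k) : {ffun 'I_k -> bool} := [ffun j => u j (+) (j == i)].

Lemma flipK i : involutive (flip^~ i).
Proof. by move=> u; apply/ffunP => j; rewrite !ffunE addbK. Qed.

Lemma cube_adj_flip u i : cube_adj u (flip u i).
Proof.
apply/cards1P; exists i; apply/setP => j; rewrite !inE ffunE.
by case: (u j); case: (j == i).
Qed.

Lemma cube_adj_flip2 u i j : i != j -> cube_adj (flip u i) (flip (flip u j) i).
Proof.
move=> ij; apply/cards1P; exists j; apply/setP => l; rewrite !inE !ffunE.
by case: (u l); case: (l == i); case: (l == j).
Qed.

Lemma cube_ind (P : {ffun 'I_k -> bool} -> Prop) :
  P cube_origin -> (forall u i, ~~ u i -> P u -> P (flip u i)) -> forall u, P u.
Proof.
move=> P0 PS u; have [m] := ubnP #|[set i | u i]|.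
elim: m u => // m IH u; rewrite ltnS.
have [/setP E _|[i]] := set_0Vmem [set i | u i].
  suff -> : u = cube_origin by [].
  by apply/ffunP => i; move: (E i); rewrite !inE ffunE.
rewrite inE => ui le_m; rewrite -(flipK i u); apply: PS; first by rewrite ffunE ui eqxx.
apply: IH; apply: leq_trans le_m; rewrite (cardsD1 i [set i | u i]) inE ui add1n ltnS.
apply: subset_leq_card; apply/subsetP => j; rewrite !inE ffunE.
by case: eqP => [->|] /=; rewrite ?ui ?addbF.
Qed.

End HypercubeCoordinates.

Arguments cube_origin {k}.

Section CubeEmbedding.
Variables (T : finType) (k : nat) (f : {ffun 'I_k -> bool} -> {set T}).
Hypotheses (f_inj : injective f)
  (f_adj : forall u v, (#|symdiff (f u) (f v)| == 1) = cube_adj u v).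

Lemma symdiff_adj u v : cube_adj u v -> exists a, symdiff (f u) (f v) = [set a].
Proof. by rewrite -f_adj => /cards1P. Qed.

Lemma exists_direction i :
  exists a, symdiff (f cube_origin) (f (flip cube_origin i)) == [set a].
Proof. by have [a E] := symdiff_adj (cube_adj_flip cube_origin i); exists a; apply/eqP. Qed.

Definition direction i := xchoose (exists_direction i).

Lemma direction_origin i :
  symdiff (f cube_origin) (f (flip cube_origin i)) = [set direction i].
Proof. exact/eqP/(xchooseP (exists_direction i)). Qed.

Lemma direction_inj : injective direction.
Proof.
move=> i j dij; have := direction_origin i.
rewrite dij -(direction_origin j) => /symdiff_inj/f_inj/ffunP/(_ i).
by rewrite !ffunE eqxx => /esym/eqP.
Qed.

Lemma symdiff_flip u i : symdiff (f u) (f (flip u i)) = [set direction i].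
Proof.
elim/cube_ind: u i => [|u j uj IH] i; first exact: direction_origin.
case: (eqVneq i j) => [->|ij]; first by rewrite flipK symdiffC IH.
have [c Ec] := symdiff_adj (cube_adj_flip (flip u j) i).
have [c' Ec'] := symdiff_adj (cube_adj_flip2 u ij).
have ne : f (flip (flip u j) i) != f u.
  by apply: contra_neq ij => /f_inj/ffunP/(_ i); rewrite !ffunE eqxx; case: (u i); case: eqP.
have dji : direction j != direction i by rewrite (inj_eq direction_inj) eq_sym.
by rewrite Ec (symdiff_square (IH j) (IH i) dji Ec Ec' ne).
Qed.

Lemma mem_cube_embedding u x :
  (x \in f u) = (x \in f cube_origin) (+) (x \in direction @: [set i | u i]).
Proof.
elim/cube_ind: u => [|u j uj IH].
  suff -> : [set i | cube_origin i] = set0 :> {set 'I_k} by rewrite imset0 inE addbF.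
  by apply/setP => i; rewrite !inE ffunE.
have /symdiff_eq1/(_ x) flipE := symdiff_flip u j.
have -> : [set i | flip u j i] = j |: [set i | u i].
  by apply/setP => i; rewrite !inE ffunE; case: eqP => [->|]; rewrite ?(negbTE uj) ?addbF.
have -> : (x \in f (flip u j)) = (x \in f u) (+) (x == direction j).
  by rewrite -flipE addKb.
rewrite IH imsetU1 in_setU1 -addbA; congr addb.
case: (eqVneq x (direction j)) => [->|_]; last by rewrite addbF.
by rewrite (mem_imset _ _ direction_inj) inE (negbTE uj).
Qed.

Lemma cube_embedding_subcube :
  exists A D : {set T},
    [/\ [disjoint A & D], #|D| = k & [set f u | u : {ffun 'I_k -> bool}] = subcube A D].
Proof.
set D := direction @: [set: 'I_k]; set A := f cube_origin :\: D.
have inD x : (x \in D) = [exists i, direction i == x].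
  by apply/imsetP/existsP => [[i _ ->]|[i /eqP <-]]; exists i.
have notD S x : x \notin D -> x \in direction @: S = false.
  by move=> xD; apply: contraNF xD => /imsetP[i _ ->]; apply: imset_f.
exists A, D; split.
- by have := subxx A; rewrite {2}/A subsetD => /andP[].
- by rewrite card_imset ?cardsT ?card_ord //; apply: direction_inj.
apply/setP => X; rewrite inE; apply/imsetP/andP => [[u _ ->]|[AX XAD]].
  split; apply/subsetP => x; rewrite ?inE (mem_cube_embedding u).
    by case/andP=> xD ->; rewrite notD.
  by case: (boolP (x \in D)) => xD; rewrite ?orbT // notD // addbF => ->.
pose u := [ffun i => (direction i \in X) (+) (direction i \in f cube_origin)].
exists u => //; apply/setP => x; rewrite (mem_cube_embedding u).
case: (boolP (x \in D)) => [|xD].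
  rewrite inD => /existsP[i /eqP <-]; rewrite (mem_imset _ _ direction_inj) inE ffunE.
  by case: (_ \in X); case: (_ \in f cube_origin).
rewrite notD // addbF; apply/idP/idP => [xX|xf]; last by apply: (subsetP AX); rewrite inE xD.
by move: (subsetP XAD x xX); rewrite !inE (negbTE xD) orbF => /andP[].
Qed.

End CubeEmbedding.

Lemma subcube_embedding (T : finType) (A D : {set T}) k :
  [disjoint A & D] -> #|D| = k ->
  exists f : {ffun {ffun 'I_k -> bool} -> {set T}},
    [/\ injective f, [set f u | u : {ffun 'I_k -> bool}] = subcube A D &
        forall u v, (#|symdiff (f u) (f v)| == 1) = cube_adj u v].
Proof.
move=> AD cardD; pose e (i : 'I_k) : T := enum_val (cast_ord (esym cardD) i).
have e_inj : injective e by move=> i j /enum_val_inj/cast_ord_inj.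
have eD i : e i \in D by apply: enum_valP.
have eA i : e i \notin A by rewrite (disjointFl AD (eD i)).
have De x : x \in D -> exists i, e i = x.
  by move=> xD; exists (cast_ord cardD (enum_rank_in xD x)); rewrite /e cast_ordK enum_rankK_in.
have imD (S : {set 'I_k}) x : x \in e @: S -> x \in D by case/imsetP => i _ ->.
pose f := [ffun u : {ffun 'I_k -> bool} => A :|: e @: [set i | u i]].
have mem_f u i : (e i \in f u) = u i.
  by rewrite ffunE in_setU (negbTE (eA i)) (mem_imset _ _ e_inj) inE.
have mem_fD u x : x \notin D -> (x \in f u) = (x \in A).
  move=> xD; rewrite ffunE in_setU orbC.
  by case: (boolP (_ \in _ @: _)) => // /imD; rewrite (negbTE xD).
exists f; split.
- by move=> u v fuv; apply/ffunP => i; rewrite -!mem_f fuv.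
- apply/setP => X; rewrite inE; apply/imsetP/andP => [[u _ ->]|[AX XAD]].
    by rewrite ffunE subsetUl; split=> //; apply: setUS; apply/subsetP => x /imD.
  exists [ffun i => e i \in X] => //; apply/setP => x.
  case: (boolP (x \in D)) => [/De[i <-]|xD]; first by rewrite mem_f ffunE.
  rewrite mem_fD //; apply/idP/idP => [xX|]; last exact: (subsetP AX).
  by move: (subsetP XAD x xX); rewrite in_setU (negbTE xD) orbF.
move=> u v; suff -> : symdiff (f u) (f v) = e @: [set i | u i != v i] by rewrite card_imset.
apply/setP => x; rewrite inE; case: (boolP (x \in D)) => [/De[i <-]|xD].
  by rewrite !mem_f (mem_imset _ _ e_inj) inE; case: (u i); case: (v i).
rewrite !mem_fD // addbb; apply/esym/negbTE; apply: contra xD; exact: imD.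
Qed.

(** * Cubes of up-closed sets *)

Section UpClosedCubes.
Variables (T : finType) (r : rel T).
Implicit Types A D X : {set T}.

Definition upclosed X := [forall a, forall b, r a b && (a \in X) ==> (b \in X)].

Definition addable A := [set d | (d \notin A) && upclosed (d |: A)].

Definition removable A := [set a in A | upclosed (A :\ a)].

Definition saturated A := [forall a in removable A, [exists d in addable A, r d a]].

Definition upclosed_cube k (S : {set {set T}}) : Prop :=
  exists A D, [/\ [disjoint A & D], #|D| = k, S = subcube A D
                & {in S, forall X, upclosed X}].

Lemma upclosedP X : reflect (forall a b, r a b -> a \in X -> b \in X) (upclosed X).
Proof.
apply: (iffP forallP) => [H a b rab aX | H a].
  by have /forallP/(_ b) := H a; rewrite rab aX.
by apply/forallP => b; apply/implyP => /andP[]; apply: H.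
Qed.

Lemma upclosedU1 A d : irreflexive r ->
  upclosed A -> upclosed (d |: A) = [forall e, r d e ==> (e \in A)].
Proof.
move=> irr /upclosedP clA; apply/upclosedP/forallP => [H e | H a b rab].
  apply/implyP => rde; have := H d e rde (setU11 d A).
  by case/setU1P => // ed; rewrite ed irr in rde.
case/setU1P => [ad | aA]; last by rewrite in_setU1 (clA a b rab aA) orbT.
by rewrite ad in rab; rewrite in_setU1 (implyP (H b) rab) orbT.
Qed.

Lemma upclosedD1 A a : irreflexive r -> upclosed A -> a \in A ->
  upclosed (A :\ a) = [forall c, r c a ==> (c \notin A)].
Proof.
move=> irr /upclosedP clA aA; apply/upclosedP/forallP => [H c | H x y rxy].
  apply/implyP => rca; apply/negP => cA.
  have ca : c != a by apply: contraTneq rca => ->; rewrite irr.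
  by have := H c a rca; rewrite !in_setD1 ca cA eqxx => /(_ isT).
rewrite !in_setD1 => /andP[xa xA]; rewrite (clA x y rxy xA) andbT.
by apply/eqP => ya; subst y; move: (implyP (H x) rxy); rewrite xA.
Qed.

Lemma subcube_upclosed A D :
  upclosed A -> {in D, forall d, upclosed (d |: A)} -> {in subcube A D, forall X, upclosed X}.
Proof.
move=> /upclosedP clA clD X; rewrite inE => /andP[AX XAD]; apply/upclosedP => a b rab aX.
have := subsetP XAD a aX; rewrite in_setU => /orP[aA | aD].
  exact/(subsetP AX)/(clA a b rab aA).
have /upclosedP/(_ a b rab (setU11 a A)) := clD a aD.
by rewrite in_setU1 => /orP[/eqP -> // | /(subsetP AX)].
Qed.

Lemma upclosedU1D1 A a d :
  upclosed (A :\ a) -> upclosed (d |: A) -> ~~ r d a -> upclosed (d |: (A :\ a)).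
Proof.
move=> /upclosedP clAa /upclosedP cldA rda; apply/upclosedP => x y rxy.
case/setU1P => [xd | xAa]; last by rewrite in_setU1 (clAa x y rxy xAa) orbT.
rewrite xd in rxy; have := cldA d y rxy (setU11 d A).
rewrite !in_setU1 in_setD1 => /orP[-> // | ->]; rewrite andbT.
by apply/orP; right; apply/eqP => ya; rewrite -ya rxy in rda.
Qed.

Lemma addable_cube A : upclosed A -> upclosed_cube #|addable A| (subcube A (addable A)).
Proof.
move=> clA; exists A, (addable A); split => //.
  by rewrite disjoint_sym; apply/pred0P => d; rewrite !inE; case: (d \in A); rewrite ?andbF.
by apply: subcube_upclosed => // d; rewrite inE => /andP[].
Qed.

Section MaximalCube.
Variables (k : nat) (A D : {set T}).
Hypotheses (AD : [disjoint A & D]) (cardD : #|D| = k)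
  (clS : {in subcube A D, forall X, upclosed X})
  (noext : ~ exists S, upclosed_cube k.+1 S /\ subcube A D \subset S).

Let clA : upclosed A := clS (subcube_min A D).

Let clAD d : d \in D -> upclosed (d |: A).
Proof.
by move=> dD; apply: clS; rewrite inE subsetUr subUset sub1set in_setU dD orbT subsetUl.
Qed.

Lemma maximal_cube_addable : D = addable A.
Proof.
apply/eqP; rewrite eqEsubset; apply/andP; split.
  by apply/subsetP => d dD; rewrite inE clAD // andbT (disjointFl AD dD).
apply/subsetP => b; rewrite inE => /andP[bA clbA]; apply/negPn/negP => bD.
apply: noext; exists (subcube A (b |: D)); split.
  exists A, (b |: D); split => //.
  - by rewrite disjoint_setU1 bA.
  - by rewrite cardsU1 bD cardD.
  apply: subcube_upclosed => // d; rewrite in_setU1 => /orP[/eqP -> // | ]; exact: clAD.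
by rewrite subset_subcube subxx setUS // subsetUr.
Qed.

Lemma maximal_cube_saturated : saturated A.
Proof.
apply/forallP => a; apply/implyP; rewrite inE => /andP[aA clAa].
apply: contraT => /exists_inPn nra; exfalso.
have aD : a \notin D by rewrite (disjointFr AD aA).
apply: noext; exists (subcube (A :\ a) (a |: D)); split.
  exists (A :\ a), (a |: D); split => //.
  - by rewrite disjoint_setU1 setD11 (disjointWl (subsetDl A _) AD).
  - by rewrite cardsU1 aD cardD.
  apply: subcube_upclosed => // d; rewrite in_setU1 => /orP[/eqP -> | dD].
    by rewrite setD1K.
  apply: upclosedU1D1 => //; first exact: clAD.
  by apply: nra; rewrite maximal_cube_addable in dD.
rewrite subset_subcube subsetDl /=; apply/subsetP => x.
by rewrite !inE; case: (eqVneq x a) => //= _ /orP[-> | ->]; rewrite ?orbT.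
Qed.

End MaximalCube.

Lemma saturated_cube_maximal A A' D' :
  saturated A -> [disjoint A' & D'] -> {in subcube A' D', forall X, upclosed X} ->
  subcube A (addable A) \subset subcube A' D' -> D' \subset addable A.
Proof.
move=> /forall_inP satA A'D' clS'; rewrite subset_subcube => /andP[A'A AD'].
have clX X : A' \subset X -> X \subset A' :|: D' -> upclosed X.
  by move=> lo hi; apply: clS'; rewrite inE lo hi.
have AS : A \subset A' :|: D' := subset_trans (subsetUl A _) AD'.
apply/subsetP => b bD'; apply: contraT => bnot.
have bA' : b \notin A' by rewrite (disjointFl A'D' bD').
have [bA | bA] := boolP (b \in A); last first.
  suff : b \in addable A by rewrite (negbTE bnot).
  rewrite inE bA; apply: clX; first exact: subset_trans A'A (subsetU1 b A).
  by rewrite subUset sub1set in_setU bD' orbT AS.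
have A'Ab : A' \subset A :\ b by rewrite subsetD1 A'A bA'.
have AbS : A :\ b \subset A' :|: D' := subset_trans (subsetDl A _) AS.
have /exists_inP[d dadd rdb] : [exists d in addable A, r d b].
  by apply: satA; rewrite inE bA clX.
have /upclosedP/(_ d b rdb (setU11 d _)) : upclosed (d |: (A :\ b)).
  apply: clX; first exact: subset_trans A'Ab (subsetU1 d _).
  by rewrite subUset sub1set AbS (subsetP AD') // in_setU dadd orbT.
by rewrite in_setU1 setD11 orbF => /eqP bd; rewrite bd dadd in bnot.
Qed.

Lemma maximal_upclosed_cubeP k S :
  (upclosed_cube k S /\ ~ exists S', upclosed_cube k.+1 S' /\ S \subset S') <->
  exists A, [/\ upclosed A, saturated A, #|addable A| = k & S = subcube A (addable A)].
Proof.
split => [[[A [D [AD cardD -> clS]]] noext] | [A [clA satA cardA ->]]].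
  have DA := maximal_cube_addable AD cardD clS noext.
  exists A; split; rewrite -?DA //; first exact: clS (subcube_min A D).
  exact: maximal_cube_saturated AD cardD clS noext.
split; first by rewrite -{1}cardA; apply: addable_cube.
move=> [_ [[A' [D' [A'D' cardD' -> clS']]] sub]].
have := subset_leq_card (saturated_cube_maximal satA A'D' clS' sub).
by rewrite cardD' cardA ltnn.
Qed.

End UpClosedCubes.

(** * Path posets *)

Definition path_covers (rise : nat -> bool) (a b : nat) : bool :=
  ((b == a.+1) && rise a) || ((a == b.+1) && ~~ rise b).

Lemma path_covers_irr rise a : path_covers rise a a = false.
Proof. by rewrite /path_covers !eqn_leq ltnn !andbF. Qed.

Section PathLocal.
Variables (rise : nat -> bool) (n : nat) (x : nat -> bool).

(* For the indicator [x] of a subset of the path on [0, n), the local forms at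
   position [j] of [upclosed], [addable], [removable] and [saturated]. *)

Definition upper_in j :=
  ((j.+1 < n) && rise j ==> x j.+1) && ((0 < j) && ~~ rise j.-1 ==> x j.-1).

Definition lower_out j :=
  ((j.+1 < n) && ~~ rise j ==> ~~ x j.+1) && ((0 < j) && rise j.-1 ==> ~~ x j.-1).

Definition addable_at j := ~~ x j && upper_in j.

Definition lower_addable j :=
  ((j.+1 < n) && ~~ rise j && addable_at j.+1) || ((0 < j) && rise j.-1 && addable_at j.-1).

Definition path_ok j := (x j ==> upper_in j) && (x j && lower_out j ==> lower_addable j).

Lemma upper_inP j : j < n ->
  reflect (forall b, b < n -> path_covers rise j b -> x b) (upper_in j).
Proof.
move=> jn; apply: (iffP andP) => [[H1 H2] b bn /orP[/andP[/eqP bj rj] | /andP[/eqP jb rb]] | H].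
- by subst b; apply: (implyP H1); rewrite bn rj.
- by subst j; apply: (implyP H2).
split; apply/implyP => /andP[j1n rj]; apply: H => //; first by rewrite /path_covers eqxx rj.
- exact: leq_ltn_trans (leq_pred j) jn.
by case: j jn j1n rj => //= j; rewrite /path_covers eqxx => _ _ ->; rewrite orbT.
Qed.

Lemma lower_outP j : j < n ->
  reflect (forall c, c < n -> path_covers rise c j -> ~~ x c) (lower_out j).
Proof.
move=> jn; apply: (iffP andP) => [[H1 H2] c cn /orP[/andP[/eqP jc rc] | /andP[/eqP cj rj]] | H].
- by subst j; apply: (implyP H2).
- by subst c; apply: (implyP H1); rewrite cn rj.
split; apply/implyP => /andP[j1n rj]; apply: H => //; first by rewrite /path_covers eqxx rj orbT.
- exact: leq_ltn_trans (leq_pred j) jn.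
by case: j jn j1n rj => //= j; rewrite /path_covers eqxx => _ _ ->.
Qed.

Lemma lower_addableP j : j < n ->
  reflect (exists2 d, d < n & path_covers rise d j && addable_at d) (lower_addable j).
Proof.
move=> jn; apply: (iffP orP) => [[/andP[/andP[j1n rj] addj] | /andP[/andP[j0 rj] addj]] |
                                  [d dn /andP[/orP[/andP[/eqP jd rd] | /andP[/eqP dj rj]] addd]]].
- by exists j.+1 => //; rewrite /path_covers eqxx rj orbT.
- exists j.-1; first exact: leq_ltn_trans (leq_pred j) jn.
  by rewrite addj andbT; case: j jn j0 rj {addj} => //= j; rewrite /path_covers eqxx => _ _ ->.
- by right; subst j; rewrite rd addd.
- by left; subst d; rewrite dn rj addd.
Qed.

End PathLocal.

Section Locality.
Variables (rise : nat -> bool) (n m N : nat) (x y : nat -> bool).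
Hypotheses (xy : forall i, i < N -> x i = y i) (Nn : N <= n) (Nm : N <= m).

Lemma upper_in_local j : j.+1 < N -> upper_in rise n x j = upper_in rise m y j.
Proof.
move=> jN; rewrite /upper_in !(leq_trans jN) // !xy //.
exact: leq_ltn_trans (leq_pred j) (ltnW jN).
Qed.

Lemma lower_out_local j : j.+1 < N -> lower_out rise n x j = lower_out rise m y j.
Proof.
move=> jN; rewrite /lower_out !(leq_trans jN) // !xy //.
exact: leq_ltn_trans (leq_pred j) (ltnW jN).
Qed.

Lemma addable_at_local j : j.+1 < N -> addable_at rise n x j = addable_at rise m y j.
Proof. by move=> jN; rewrite /addable_at upper_in_local // xy // ltnW. Qed.

Lemma path_ok_local j : j.+2 < N -> path_ok rise n x j = path_ok rise m y j.
Proof.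
move=> jN; have j1N := ltnW jN.
rewrite /path_ok /lower_addable upper_in_local // lower_out_local // xy ?(ltnW j1N) //.
rewrite !(leq_trans j1N) // addable_at_local //.
by rewrite (addable_at_local (j := j.-1)) //; apply: leq_ltn_trans j1N; rewrite ltnS leq_pred.
Qed.

End Locality.

Section Shift.
Variables (rise rise' x x' : nat -> bool) (n s : nat).
Hypotheses (rise_s : forall i, rise (s + i) = rise' i) (x_s : forall i, x (s + i) = x' i).

Let pred_shift k : (s + k.+1).-1 = s + k.
Proof. by rewrite addnS. Qed.

Lemma upper_in_shift k : 0 < k -> upper_in rise n x (s + k) = upper_in rise' (n - s) x' k.
Proof.
case: k => // k _; rewrite /upper_in -addnS ltn_subRL rise_s x_s addn_gt0 orbT.
by rewrite pred_shift rise_s x_s.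
Qed.

Lemma lower_out_shift k : 0 < k -> lower_out rise n x (s + k) = lower_out rise' (n - s) x' k.
Proof.
case: k => // k _; rewrite /lower_out -addnS ltn_subRL rise_s x_s addn_gt0 orbT.
by rewrite pred_shift rise_s x_s.
Qed.

Lemma addable_at_shift k : 0 < k -> addable_at rise n x (s + k) = addable_at rise' (n - s) x' k.
Proof. by move=> k0; rewrite /addable_at upper_in_shift // x_s. Qed.

Lemma path_ok_shift k : 1 < k -> path_ok rise n x (s + k) = path_ok rise' (n - s) x' k.
Proof.
case: k => // -[|k] // _; rewrite /path_ok /lower_addable upper_in_shift // lower_out_shift //.
rewrite -addnS ltn_subRL rise_s x_s addn_gt0 orbT pred_shift rise_s.
by rewrite -addnS !addable_at_shift.
Qed.

End Shift.

Definition good_on rise (l : seq bool) (js : seq nat) :=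
  all (path_ok rise (size l) (nth false l)) js.

Definition weight_on rise (l : seq bool) (js : seq nat) :=
  count (addable_at rise (size l) (nth false l)) js.

Definition path_good rise (l : seq bool) := good_on rise l (iota 0 (size l)).

Definition path_weight rise (l : seq bool) := weight_on rise l (iota 0 (size l)).

Lemma card_ord_count n (P : pred nat) : #|[set i : 'I_n | P i]| = count P (iota 0 n).
Proof. by rewrite -sum1dep_card -(big_mkord P (fun _ => 1)) /index_iota subn0 sum1_count. Qed.

Section PathSets.
Variables (rise : nat -> bool) (n : nat).
Implicit Types A : {set 'I_n}.

Definition path_rel : rel 'I_n := fun a b => path_covers rise a b.

Definition bits A : seq bool := [seq i \in A | i <- enum 'I_n].

Local Notation x A := (nth false (bits A)).

Lemma size_bits A : size (bits A) = n.
Proof. by rewrite size_map size_enum_ord. Qed.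

Lemma nth_bits A (i : 'I_n) : x A i = (i \in A).
Proof. by rewrite (nth_map i) ?size_enum_ord // nth_ord_enum. Qed.

Lemma path_rel_irr : irreflexive path_rel.
Proof. exact: path_covers_irr. Qed.

Lemma upclosed_bits A :
  upclosed path_rel A = all (fun j => x A j ==> upper_in rise n (x A) j) (iota 0 n).
Proof.
apply/upclosedP/allP => [H j | H a b rab aA].
  rewrite mem_iota => /andP[_ jn]; apply/implyP => xj; apply/upper_inP => // b bn rjb.
  by rewrite -[b]/(val (Ordinal bn)) nth_bits (H (Ordinal jn)) // -nth_bits.
have := H a; rewrite mem_iota ltn_ord nth_bits aA => /(_ isT) /upper_inP.
by move=> /(_ (ltn_ord a) b (ltn_ord b) rab); rewrite nth_bits.
Qed.

Lemma mem_addable_bits A (d : 'I_n) :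
  upclosed path_rel A -> (d \in addable path_rel A) = addable_at rise n (x A) d.
Proof.
move=> clA; rewrite inE upclosedU1 //; last exact: path_rel_irr.
rewrite /addable_at nth_bits; congr andb; apply/forallP/upper_inP => // [H b bn rdb | H e].
  by rewrite -[b]/(val (Ordinal bn)) nth_bits (implyP (H (Ordinal bn))).
by apply/implyP => rde; rewrite -nth_bits (H e).
Qed.

Lemma mem_removable_bits A (a : 'I_n) :
  upclosed path_rel A -> (a \in removable path_rel A) = (a \in A) && lower_out rise n (x A) a.
Proof.
move=> clA; rewrite inE; apply: andb_id2l => aA.
rewrite upclosedD1 //; last exact: path_rel_irr.
apply/forallP/lower_outP => // [H c cn rca | H c].
  by rewrite -[c]/(val (Ordinal cn)) nth_bits (implyP (H (Ordinal cn))).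
by apply/implyP => rca; rewrite -nth_bits (H c).
Qed.

Lemma card_addable_bits A :
  upclosed path_rel A -> #|addable path_rel A| = path_weight rise (bits A).
Proof.
move=> clA; rewrite /path_weight /weight_on size_bits -card_ord_count.
by apply: eq_card => d; rewrite inE mem_addable_bits.
Qed.

Lemma path_good_bits A : path_good rise (bits A) = upclosed path_rel A && saturated path_rel A.
Proof.
rewrite /path_good /good_on size_bits.
transitivity (all (fun j => x A j ==> upper_in rise n (x A) j) (iota 0 n) &&
   all (fun j => x A j && lower_out rise n (x A) j ==> lower_addable rise n (x A) j) (iota 0 n)).
  by rewrite -all_predI.
rewrite -upclosed_bits; apply: andb_id2l => clA; apply/allP/forall_inP => [H a | H j].
  rewrite mem_removable_bits // => /andP[aA low]; apply/exists_inP.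
  have := H a; rewrite mem_iota ltn_ord nth_bits aA low => /(_ isT) /lower_addableP.
  case=> [|d dn /andP[rda addd]]; first exact: ltn_ord.
  by exists (Ordinal dn); rewrite ?mem_addable_bits.
rewrite mem_iota => /andP[_ jn]; apply/implyP => /andP[xj low].
have /exists_inP[d addd rdj] : [exists d in addable path_rel A, path_rel d (Ordinal jn)].
  by apply: H; rewrite mem_removable_bits // -nth_bits xj.
apply/lower_addableP => //; exists d; first exact: ltn_ord.
by rewrite -mem_addable_bits // addd andbT.
Qed.

End PathSets.

Arguments path_rel : clear implicits.

Fixpoint bitseqs n : seq (seq bool) :=
  if n is m.+1 then map (rcons^~ false) (bitseqs m) ++ map (rcons^~ true) (bitseqs m)
  else [:: [::]].

Lemma mem_bitseqs n l : (l \in bitseqs n) = (size l == n).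
Proof.
elim: n l => [|n IH] l; first by rewrite inE; case: l.
case/lastP: l => [|l b]; first by rewrite mem_cat; apply/norP; split; apply/mapP => -[[] ].
rewrite /= mem_cat size_rcons eqSS -IH.
have mem_rc c : (rcons l b \in map (rcons^~ c) (bitseqs n)) = (b == c) && (l \in bitseqs n).
  apply/mapP/andP => [[l' l'n /eqP] | [/eqP -> ln]]; last by exists l.
  by rewrite eqseq_rcons => /andP[/eqP -> ->].
by rewrite !mem_rc; case: b {mem_rc}; rewrite ?orbF.
Qed.

Lemma uniq_bitseqs n : uniq (bitseqs n).
Proof.
elim: n => //= n IH; rewrite cat_uniq !map_inj_uniq ?IH ?andbT //=; try exact: rcons_injl.
apply/hasPn => _ /mapP[l _ ->]; apply/mapP => -[l' _ /eqP].
by rewrite eqseq_rcons andbF.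
Qed.

Lemma count_bitseqs_cat (P : pred (seq bool)) m j :
  count P (bitseqs (m + j)) = \sum_(t <- bitseqs j) count (fun l => P (l ++ t)) (bitseqs m).
Proof.
elim: j P => [|j IH] P.
  by rewrite addn0 big_seq1; apply: eq_count => l; rewrite cats0.
rewrite addnS /= count_cat !count_map !IH big_cat !big_map.
by congr addn; apply: eq_bigr => t _; apply: eq_count => l; rewrite /= rcons_cat.
Qed.

Lemma bits_inj n : injective (@bits n).
Proof. by move=> A B AB; apply/setP => i; rewrite -!nth_bits AB. Qed.

Lemma card_bits n (P : pred (seq bool)) :
  #|[set A : {set 'I_n} | P (bits A)]| = count P (bitseqs n).
Proof.
rewrite cardE -(size_map (@bits n)) -size_filter; apply: perm_size.
apply: uniq_perm; first by rewrite (map_inj_uniq (@bits_inj n)) enum_uniq.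
  by rewrite filter_uniq // uniq_bitseqs.
move=> l; rewrite mem_filter mem_bitseqs; apply/mapP/andP => [[A] | [Pl /eqP ln]].
  by rewrite mem_enum inE => PA ->; rewrite size_bits.
have lE : l = bits [set i : 'I_n | nth false l i].
  apply: (@eq_from_nth _ false) => [|j]; rewrite ?size_bits // ln => jn.
  by rewrite -[j]/(val (Ordinal jn)) nth_bits inE.
by exists [set i : 'I_n | nth false l i]; rewrite // mem_enum inE -lE.
Qed.

(** * The zigzag poset Xi_n *)

Definition xi_rise (j : nat) : bool := (2 <= j) && ~~ odd j.

Lemma coversE a b : covers a b = path_covers xi_rise a b.
Proof.
by rewrite /covers /path_covers /xi_rise; case: a => [|[|[|a]]]; case: b => [|[|[|b]]];
   rewrite //= ?andbT ?andbF ?orbF ?negbK.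
Qed.

Lemma isFilter_upclosed n (X : {set 'I_n}) : isFilter X = upclosed (path_rel xi_rise n) X.
Proof.
apply/forallP/upclosedP => [H a b rab aX | H a].
  by have /forallP/(_ b) := H a; rewrite aX /Xi_le connect1 // /= coversE.
apply/forallP => b; apply/implyP => /andP[aX /connectP[p pth ->]].
elim: p a pth aX => //= c p IH a /andP[cac pth] aX.
by apply: IH pth (H a c _ aX); rewrite /path_rel -coversE.
Qed.

Lemma Omega_adj_symdiff n (X Y : {set 'I_n}) : Omega_adj X Y = (#|symdiff X Y| == 1).
Proof.
have D1 (Z : {set 'I_n}) a : a \in Z -> symdiff Z (Z :\ a) = [set a].
  by move=> aZ; apply/symdiff_eq1 => x; rewrite in_setD1; case: eqP => [->|] /=; rewrite ?aZ ?addbb.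
apply/orP/cards1P => [[] /existsP[a /andP[aZ /eqP ->]] | [a E]].
- by exists a; apply: D1.
- by exists a; rewrite symdiffC; apply: D1.
have /symdiff_eq1 Ex := E; have := Ex a; rewrite eqxx.
have eq_off x : x != a -> (x \in X) = (x \in Y).
  by move=> xa; move: (Ex x); rewrite (negbTE xa); case: (x \in X); case: (x \in Y).
case aX: (a \in X) => /= aY; [left | right]; apply/existsP; exists a.
  rewrite aX; apply/eqP/setP => x; rewrite in_setD1.
  by case: (eqVneq x a) => [-> | /eq_off]; rewrite ?aX ?(negbTE aY).
rewrite aY; apply/eqP/setP => x; rewrite in_setD1.
by case: (eqVneq x a) => [-> | /eq_off]; rewrite ?aX.
Qed.

Lemma isInducedCubeP n k (S : {set {set 'I_n}}) :
  reflect (upclosed_cube (path_rel xi_rise n) k S) (@isInducedCube n k S).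
Proof.
apply: (iffP andP) => [[/forall_inP filS /existsP[f]] | [A [D [AD cardD -> clS]]]].
  case/and3P=> /injectiveP f_inj /eqP Sf /forallP adj.
  have f_adj u v : (#|symdiff (f u) (f v)| == 1) = cube_adj u v.
    by rewrite -Omega_adj_symdiff; apply/eqP/(forallP (adj u)).
  have [A [D [AD cardD imf]]] := cube_embedding_subcube f_inj f_adj.
  exists A, D; split => //; first by rewrite Sf.
  by move=> X XS; rewrite -isFilter_upclosed; apply: filS.
have [f [f_inj imf f_adj]] := subcube_embedding AD cardD.
split; first by apply/forall_inP => X /clS; rewrite isFilter_upclosed.
apply/existsP; exists f; rewrite imf eqxx /=; apply/andP; split; first exact/injectiveP.
by apply/forallP => u; apply/forallP => v; rewrite Omega_adj_symdiff f_adj.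
Qed.

Lemma isMaximalCubeP n k (S : {set {set 'I_n}}) :
  @isMaximalCube n k S <->
  exists A, [/\ upclosed (path_rel xi_rise n) A, saturated (path_rel xi_rise n) A,
                #|addable (path_rel xi_rise n) A| = k
              & S = subcube A (addable (path_rel xi_rise n) A)].
Proof.
rewrite -maximal_upclosed_cubeP; split.
  case/andP=> /isInducedCubeP cubeS /existsPn noext; split => //.
  move=> [S' [/isInducedCubeP cubeS' sub]].
  by have := noext S'; rewrite cubeS' sub.
move=> [/isInducedCubeP cubeS noext]; apply/andP; split => //; apply/existsPn => S'.
by apply/negP => /andP[/isInducedCubeP cubeS' sub]; apply: noext; exists S'.
Qed.

Definition xi_good k (l : seq bool) := path_good xi_rise l && (path_weight xi_rise l == k).

Definition xi_count n k := count (xi_good k) (bitseqs n).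

Lemma h_xi_count n k : h n k = xi_count n k.
Proof.
set r := path_rel xi_rise n.
set good := [set A : {set 'I_n} | [&& upclosed r A, saturated r A & #|addable r A| == k]].
rewrite /h; have -> : [set S | @isMaximalCube n k S] = (fun A => subcube A (addable r A)) @: good.
  apply/setP => S; rewrite inE; apply/idP/imsetP.
    by case/isMaximalCubeP => A [clA satA cardA ->]; exists A; rewrite // inE clA satA cardA /=.
  by case=> A; rewrite inE => /and3P[clA satA /eqP cardA] ->; apply/isMaximalCubeP; exists A.
rewrite card_in_imset; last by move=> A B _ _ /subcube_injl.
rewrite /xi_count -card_bits; apply: eq_card => A; rewrite !inE /xi_good path_good_bits -andbA.
by apply: andb_id2l => clA; rewrite card_addable_bits.
Qed.

(** * The recurrence for h *)

Definition zigzag (o : bool) (i : nat) : bool := odd i == o.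

Lemma xi_rise_shift s i : 1 < s -> xi_rise (s + i) = zigzag (odd s) i.
Proof.
move=> s1; rewrite /xi_rise /zigzag (leq_trans s1 (leq_addr _ _)) oddD.
by case: (odd s); case: (odd i).
Qed.

(* Conditions at positions below [size l0 + 2] only read [l0 ++ v]; the others
   only read [v ++ t] and, through the orientation, the parity of [size l0]. *)
Section XiSplit.
Variables (l0 v t : seq bool).
Hypotheses (l0_2 : 1 < size l0) (v4 : size v = 4).

Local Notation s := (size l0).
Local Notation w := (l0 ++ v ++ t).

Lemma iota_xi_split : iota 0 (size w) = iota 0 (s + 2) ++ map (addn s) (iota 2 (size t + 2)).
Proof.
have -> : size w = s + 2 + (size t + 2) by rewrite !size_cat v4; lia.
by rewrite iotaD add0n iotaDl.
Qed.

Let w_head i : i < s + 4 -> nth false w i = nth false (l0 ++ v) i.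
Proof. by move=> ilt; rewrite catA nth_cat size_cat v4 ilt. Qed.

Let w_tail i : nth false w (s + i) = nth false (v ++ t) i.
Proof. by rewrite nth_cat ltnNge leq_addr /= addKn. Qed.

Lemma path_good_xi_split :
  path_good xi_rise w =
  good_on xi_rise (l0 ++ v) (iota 0 (s + 2)) &&
  good_on (zigzag (odd s)) (v ++ t) (iota 2 (size t + 2)).
Proof.
rewrite /path_good /good_on iota_xi_split all_cat all_map; congr andb.
  apply: eq_in_all => j; rewrite mem_iota add0n => /andP[_ js].
  apply: (@path_ok_local xi_rise _ _ (s + 4)); first exact: w_head.
  - by rewrite !size_cat v4; lia.
  - by rewrite size_cat v4.
  - lia.
apply: eq_in_all => i; rewrite mem_iota => /andP[i2 _] /=.
have -> : size (v ++ t) = size w - s by rewrite [size w]size_cat addKn.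
apply: path_ok_shift => // j; rewrite ?w_tail //.
exact: xi_rise_shift.
Qed.

Lemma path_weight_xi_split :
  path_weight xi_rise w =
  weight_on xi_rise (l0 ++ v) (iota 0 (s + 2)) +
  weight_on (zigzag (odd s)) (v ++ t) (iota 2 (size t + 2)).
Proof.
rewrite /path_weight /weight_on iota_xi_split count_cat count_map; congr addn.
  apply: eq_in_count => j; rewrite mem_iota add0n => /andP[_ js].
  apply: (@addable_at_local xi_rise _ _ (s + 4)); first exact: w_head.
  - by rewrite !size_cat v4; lia.
  - by rewrite size_cat v4.
  - lia.
apply: eq_in_count => i; rewrite mem_iota => /andP[i2 _] /=.
have -> : size (v ++ t) = size w - s by rewrite [size w]size_cat addKn.
apply: addable_at_shift => [j||]; rewrite ?w_tail //; last exact: ltnW.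
exact: xi_rise_shift.
Qed.

End XiSplit.

(* A good word of length at least 9 and positive weight ends with [end2] or
   [end3] (depending on the parity of its length); deleting that ending leaves
   a good word with exactly one addable position less. *)
Definition end2 (o : bool) := if o then [:: false; false] else [:: true; false].
Definition end3 (o : bool) := if o then [:: true; false; true] else [:: false; false; false].

Lemma zigzag_tail_step (P : bool) (W k : nat) o a b c d p q r :
  (P && good_on (zigzag o) [:: a; b; c; d; p; q; r] (iota 2 5)) &&
    (W + weight_on (zigzag o) [:: a; b; c; d; p; q; r] (iota 2 5) == k.+1) =
  if [:: q; r] == end2 o then
    (P && good_on (zigzag o) [:: a; b; c; d; p] (iota 2 3)) &&
      (W + weight_on (zigzag o) [:: a; b; c; d; p] (iota 2 3) == k)
  else if [:: p; q; r] == end3 o then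
    (P && good_on (zigzag o) [:: a; b; c; d] (iota 2 2)) &&
      (W + weight_on (zigzag o) [:: a; b; c; d] (iota 2 2) == k)
  else false.
Proof.
by case: o; case: a; case: b; case: c; case: d; case: p; case: q; case: r;
   rewrite /good_on /weight_on /= ?andbF ?andbT ?addn0 ?addn1 ?addn2 ?addn3 ?eqSS.
Qed.

Lemma zigzag_tail_weight_pos (P : bool) (W : nat) o a b c d p q r :
  (P && good_on (zigzag o) [:: a; b; c; d; p; q; r] (iota 2 5)) &&
    (W + weight_on (zigzag o) [:: a; b; c; d; p; q; r] (iota 2 5) == 0) = false.
Proof.
by case: o; case: a; case: b; case: c; case: d; case: p; case: q; case: r;
   rewrite /good_on /weight_on /= ?andbF ?andbT ?addn0 ?addn1 ?addn2 ?addn3 ?addnS ?andbF.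
Qed.

Lemma split_last4 (T : Type) (l : seq T) :
  3 < size l -> exists l0 a b c d, l = l0 ++ [:: a; b; c; d].
Proof.
move=> l4; exists (take (size l - 4) l).
have := cat_take_drop (size l - 4) l; have := size_drop (size l - 4) l.
case: (drop _ l) => [|a [|b [|c [|d [|? ?]]]]] /=; try lia.
by move=> _ E; exists a, b, c, d; rewrite E.
Qed.

Lemma xi_good_split k l0 v t : 1 < size l0 -> size v = 4 ->
  xi_good k (l0 ++ v ++ t) =
  (good_on xi_rise (l0 ++ v) (iota 0 (size l0 + 2)) &&
     good_on (zigzag (odd (size l0))) (v ++ t) (iota 2 (size t + 2))) &&
  (weight_on xi_rise (l0 ++ v) (iota 0 (size l0 + 2)) +
     weight_on (zigzag (odd (size l0))) (v ++ t) (iota 2 (size t + 2)) == k).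
Proof. by move=> l0_2 v4; rewrite /xi_good path_good_xi_split // path_weight_xi_split. Qed.

Lemma xi_good_cat3 k l p q r : 5 < size l ->
  xi_good k.+1 (l ++ [:: p; q; r]) =
  if [:: q; r] == end2 (odd (size l)) then xi_good k (l ++ [:: p])
  else if [:: p; q; r] == end3 (odd (size l)) then xi_good k l else false.
Proof.
move=> l6; have [l0 [a [b [c [d El]]]]] := split_last4 (ltnW (ltnW l6)).
have l0_2 : 1 < size l0 by move: l6; rewrite El size_cat /=; lia.
have -> : odd (size l) = odd (size l0) by rewrite El size_cat oddD addbF.
rewrite El -[l0 ++ _]cats0 -!catA !xi_good_split //.
exact: zigzag_tail_step.
Qed.

Lemma xi_good0_cat3 l p q r : 5 < size l -> xi_good 0 (l ++ [:: p; q; r]) = false.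
Proof.
move=> l6; have [l0 [a [b [c [d El]]]]] := split_last4 (ltnW (ltnW l6)).
have l0_2 : 1 < size l0 by move: l6; rewrite El size_cat /=; lia.
by rewrite El -catA xi_good_split // zigzag_tail_weight_pos.
Qed.

Lemma xi_count_rec n k : 3 < n -> xi_count n.+4.+1 k.+1 = xi_count n.+3 k + xi_count n.+2 k.
Proof.
move=> n4.
have cat3E p q r : count (fun l => xi_good k.+1 (l ++ [:: p; q; r])) (bitseqs n.+2) =
    if [:: q; r] == end2 (odd n.+2) then count (fun l => xi_good k (l ++ [:: p])) (bitseqs n.+2)
    else if [:: p; q; r] == end3 (odd n.+2) then count (xi_good k) (bitseqs n.+2) else 0.
  have cat3E_l l : l \in bitseqs n.+2 -> xi_good k.+1 (l ++ [:: p; q; r]) =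
      if [:: q; r] == end2 (odd n.+2) then xi_good k (l ++ [:: p])
      else if [:: p; q; r] == end3 (odd n.+2) then xi_good k l else false.
    by rewrite mem_bitseqs => /eqP ln; rewrite xi_good_cat3 ln.
  rewrite (eq_in_count cat3E_l).
  by case: ifP => _; last case: ifP => _; last exact: count_pred0.
have -> : n.+4.+1 = n.+2 + 3 by rewrite !addnS addn0.
have -> : n.+3 = n.+2 + 1 by rewrite addn1.
rewrite /xi_count !count_bitseqs_cat [bitseqs 3]/= [bitseqs 1]/= !big_cons !big_nil !cat3E.
by case: (odd n.+2); rewrite /= ?addn0; lia.
Qed.

Lemma xi_count0 n : 3 < n -> xi_count n.+4.+1 0 = 0.
Proof.
move=> n4; have -> : n.+4.+1 = n.+2 + 3 by rewrite !addnS addn0.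
rewrite /xi_count count_bitseqs_cat big1_seq // => t /andP[_]; rewrite mem_bitseqs => /eqP t3.
case: t t3 => [|p [|q [|r [|? ?]]]] // _.
rewrite (eq_in_count (a2 := pred0)) ?count_pred0 // => l.
by rewrite mem_bitseqs => /eqP ln /=; rewrite xi_good0_cat3 ?ln.
Qed.

(* A form that [vm_compute] evaluates for symbolic [k]. *)
Lemma xi_countE n k :
  xi_count n k = count_mem k (map (path_weight xi_rise) (filter (path_good xi_rise) (bitseqs n))).
Proof. by rewrite count_map count_filter; apply: eq_count => l; rewrite /xi_good andbC. Qed.

Lemma h_rec n k : h n.+4.+1 k.+1 = h n.+3 k + h n.+2 k.
Proof.
rewrite !h_xi_count; have [n4 | n3] := ltnP 3 n; first exact: xi_count_rec.
by case: n n3 => [|[|[|[|n]]]] // _; rewrite !xi_countE; case: k => [|[|[|[|k]]]]; vm_compute.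
Qed.

Lemma h_weight0 n : h n.+4.+1 0 = 0.
Proof.
rewrite h_xi_count; have [n4 | n3] := ltnP 3 n; first exact: xi_count0.
by case: n n3 => [|[|[|[|n]]]] // _; rewrite xi_countE; vm_compute.
Qed.

Lemma h_small :
  [/\ forall k, h 0 k = (k == 0), forall k, h 1 k = (k == 1), forall k, h 2 k = (k == 1) * 2,
      forall k, h 3 k = (k == 1) * 3 & forall k, h 4 k = (k == 1) + (k == 2) * 2].
Proof. by split=> k; rewrite h_xi_count xi_countE; case: k => [|[|[|k]]]; vm_compute. Qed.

(** * Generating functions *)

Import GRing.Theory.
Local Open Scope ring_scope.

Lemma sum_ord_eq (R : nmodType) (m a : nat) (F : nat -> R) :
  \sum_(i < m) (if i == a :> nat then F i else 0) = if (a < m)%N then F a else 0.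
Proof.
case: ltnP => am; last by rewrite big1 // => i _; rewrite ifN // neq_ltn (leq_trans (ltn_ord i) am).
by rewrite (bigD1 (Ordinal am)) //= eqxx big1 ?addr0 // => i /negPf; rewrite -val_eqE => ->.
Qed.

Definition monomial2 (a b : nat) : fps2 := fun i j => if (i == a) && (j == b) then 1 else 0.

Lemma fps2_mul_monomial a b g n k :
  fps2_mul (monomial2 a b) g n k = if (a <= n)%N && (b <= k)%N then g (n - a)%N (k - b)%N else 0.
Proof.
rewrite /fps2_mul (eq_bigr (fun i : 'I_n.+1 => if i == a :> nat then
    (if (b < k.+1)%N then g (n - i)%N (k - b)%N else 0) else 0)) => [|i _].
  by rewrite (sum_ord_eq _ _ (fun i => if (b < k.+1)%N then g (n - i)%N (k - b)%N else 0)) !ltnS;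
     case: (a <= n)%N.
case: (eqVneq (i : nat) a) => [ia | ia]; last first.
  by rewrite big1 // => j _; rewrite /monomial2 (negbTE ia) mul0r.
rewrite -(sum_ord_eq _ _ (fun j => g (n - i)%N (k - j)%N)); apply: eq_bigr => j _.
by rewrite /monomial2 ia eqxx /=; case: eqP; rewrite ?mul1r ?mul0r.
Qed.

Lemma fps2_mul_eql f f' g : f =2 f' -> fps2_mul f g =2 fps2_mul f' g.
Proof. by move=> ff' n k; apply: eq_bigr => i _; apply: eq_bigr => j _; rewrite ff'. Qed.

Lemma fps2_mul_subl f1 f2 g n k :
  fps2_mul (fps2_sub f1 f2) g n k = fps2_mul f1 g n k - fps2_mul f2 g n k.
Proof.
rewrite /fps2_mul -sumrB; apply: eq_bigr => i _; rewrite -sumrB.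
by apply: eq_bigr => j _; rewrite mulrBl.
Qed.

Lemma fps2_mul_X g n k : fps2_mul fps2_X g n k = if (0 < k)%N then g n k.-1 else 0.
Proof. by rewrite (fps2_mul_monomial 0 1) subn0 subn1. Qed.

Lemma fps2_mul_Y g n k : fps2_mul fps2_Y g n k = if (0 < n)%N then g n.-1 k else 0.
Proof. by rewrite (fps2_mul_monomial 1 0) subn0 subn1 andbT. Qed.

Lemma Hser_denominator_coef :
  fps2_sub (fps2_const 1)
    (fps2_mul fps2_X (fps2_mul fps2_Y (fps2_mul fps2_Y (fps2_add (fps2_const 1) fps2_Y))))
  =2 fps2_sub (fps2_sub (monomial2 0 0) (monomial2 2 1)) (monomial2 3 1).
Proof.
move=> n k; rewrite /fps2_sub fps2_mul_X !fps2_mul_Y /fps2_add /fps2_const /fps2_Y /monomial2.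
by case: n => [|[|[|[|n]]]]; case: k => [|[|k]]; rewrite /= ?subr0 ?sub0r ?addr0 ?add0r.
Qed.

Lemma Hser_numerator_coef a b :
  fps2_add Hser (fps2_add (fps2_mul (fps2_sub (fps2_const 1) fps2_X) fps2_Y) (fps2_const 1)) a b =
  (h a b)%:Z + (if a == 1%N then (b == 0%N)%:Z - (b == 1%N)%:Z else 0)
  + ((a == 0%N) && (b == 0%N))%:Z.
Proof.
rewrite /fps2_add /Hser fps2_mul_subl fps2_mul_X (fps2_mul_monomial 0 0) !subn0 /fps2_const /fps2_Y.
by case: a => [|[|a]]; case: b => [|[|b]]; rewrite /= ?subr0 ?addr0.
Qed.

Lemma Hser_identity n k :
  fps2_mul
    (fps2_sub (fps2_const 1)
       (fps2_mul fps2_X (fps2_mul fps2_Y (fps2_mul fps2_Y (fps2_add (fps2_const 1) fps2_Y)))))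
    (fps2_add Hser (fps2_add (fps2_mul (fps2_sub (fps2_const 1) fps2_X) fps2_Y) (fps2_const 1)))
    n k
  = fps2_add (fps2_const 2) fps2_Y n k.
Proof.
rewrite (fps2_mul_eql _ Hser_denominator_coef) !fps2_mul_subl.
rewrite !fps2_mul_monomial !Hser_numerator_coef.
have [H0 H1 H2 H3 H4] := h_small.
rewrite /fps2_add /fps2_const /fps2_Y.
case: n => [|[|[|[|[|n]]]]]; case: k => [|k];
  rewrite /= ?subSS ?subn0 ?H0 ?H1 ?H2 ?H3 ?H4 ?h_rec ?h_weight0.
all: lia.
Qed.

Definition monomial (a : nat) : fps := fun i => if i == a then 1 else 0.

Lemma fps_mul_monomial a g n : fps_mul (monomial a) g n = if (a <= n)%N then g (n - a)%N else 0.
Proof.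
rewrite /fps_mul (eq_bigr (fun i : 'I_n.+1 => if i == a :> nat then g (n - a)%N else 0)).
  by rewrite (sum_ord_eq _ _ (fun _ => g (n - a)%N)) ltnS.
by move=> i _; rewrite /monomial; case: eqP => [->|_]; rewrite ?mul1r ?mul0r.
Qed.

Lemma fps_mul_eql f f' g : f =1 f' -> fps_mul f g =1 fps_mul f' g.
Proof. by move=> ff' n; apply: eq_bigr => i _; rewrite ff'. Qed.

Lemma fps_mul_subl f1 f2 g n : fps_mul (fps_sub f1 f2) g n = fps_mul f1 g n - fps_mul f2 g n.
Proof. by rewrite /fps_mul -sumrB; apply: eq_bigr => i _; rewrite mulrBl. Qed.

Lemma fps_mul_X g n : fps_mul fps_X g n = if (0 < n)%N then g n.-1 else 0.
Proof. by rewrite (fps_mul_monomial 1) subn1. Qed.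

Lemma fps_mul_const c g n : fps_mul (fps_const c) g n = c * g n.
Proof.
rewrite /fps_mul big_ord_recl big1 ?addr0 => [|i _]; first by rewrite subn0.
by rewrite /fps_const /= mul0r.
Qed.

Lemma Pser_denominator_coef :
  fps_sub (fps_sub (fps_const 1) (fps_mul fps_X fps_X))
    (fps_mul fps_X (fps_mul fps_X fps_X))
  =1 fps_sub (fps_sub (monomial 0) (monomial 2)) (monomial 3).
Proof.
move=> i; rewrite /fps_sub !fps_mul_X /fps_X /fps_const /monomial.
by case: i => [|[|[|[|i]]]]; rewrite /= ?subr0 ?sub0r ?addr0 ?add0r.
Qed.

Lemma Pser_identity n :
  fps_mul
    (fps_sub (fps_sub (fps_const 1) (fps_mul fps_X fps_X))
       (fps_mul fps_X (fps_mul fps_X fps_X)))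
    Pser n
  = fps_add (fps_const 1)
      (fps_add (fps_mul (fps_const 2) fps_X) (fps_mul (fps_const 2) (fps_mul fps_X fps_X))) n.
Proof.
rewrite (fps_mul_eql _ Pser_denominator_coef) !fps_mul_subl !fps_mul_monomial.
rewrite /fps_add !fps_mul_const.
rewrite !fps_mul_X /fps_const /fps_X /Pser.
by case: n => [|[|[|n]]]; rewrite /= ?subSS ?subn0 //; lia.
Qed.

Theorem mainTheorem14 :
  (forall n k : nat,
     fps2_mul
       (fps2_sub (fps2_const 1)
          (fps2_mul fps2_X (fps2_mul fps2_Y (fps2_mul fps2_Y
             (fps2_add (fps2_const 1) fps2_Y)))))
       (fps2_add Hser
          (fps2_add (fps2_mul (fps2_sub (fps2_const 1) fps2_X) fps2_Y)
                    (fps2_const 1)))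
       n k
     = fps2_add (fps2_const 2) fps2_Y n k)
  /\
  (forall n : nat,
     fps_mul
       (fps_sub (fps_sub (fps_const 1) (fps_mul fps_X fps_X))
                (fps_mul fps_X (fps_mul fps_X fps_X)))
       Pser n
     = fps_add (fps_const 1)
         (fps_add (fps_mul (fps_const 2) fps_X)
                  (fps_mul (fps_const 2) (fps_mul fps_X fps_X))) n).
Proof. split; [exact: Hser_identity | exact: Pser_identity]. Qed.
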